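(* Let $A,B$ be unital Banach algebras and let $X$ be a Banach space which is simultaneously a left Banach $A$-module that is a left function module over $A$, and a right Banach $B$-module that is a right function module over $B$ (no compatibility between the two actions is assumed). Then $(a\cdot x)\cdot b=a\cdot(x\cdot b)$ for all $a\in A$, $x\in X$, $b\in B$; i.e. the two actions make $X$ an $A$-$B$-bimodule.
   Context: A unital Banach algebra has a unit of norm 1. A left Banach $A$-module is a Banach space $X$ with left action satisfying $1\cdot x=x$ and $\|a\cdot x\|\le\|a\|\|x\|$; right Banach modules analogously. $X$ is a left (resp. right) function module over $A$ (resp. $B$) if there exist a compact Hausdorff space $K$, a linear isometry $i\colon X\to C(K)$ and a contractive unital homomorphism $\theta$ from $A$ (resp. $B$) to $C(K)$ with $i(a\cdot x)=\theta(a)i(x)$ (resp. $i(x\cdot b)=i(x)\theta(b)$). *)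

From HB Require Import structures.
From mathcomp Require Import all_boot all_order all_algebra.
From mathcomp Require Import all_classical all_reals all_analysis.
From mathcomp Require Import complex.
Set Implicit Arguments. Unset Strict Implicit. Unset Printing Implicit Defensive.
Import Order.TTheory GRing.Theory Num.Theory.
Import numFieldTopology.Exports numFieldNormedType.Exports.
Local Open Scope ring_scope.
Local Open Scope complex_scope.

(* The complex field over R, packaged as a numClosedFieldType so that it
   carries its canonical (norm) topology from MathComp-Analysis. *)
Definition Cplx (R : realType) : numClosedFieldType := R[i].

Definition unital_banach_algebra (R : realType) (A : completeNormedModType (Cplx R))
    (mul : A -> A -> A) (one : A) : Prop :=
  [/\ associative mul /\ left_id one mul /\ right_id one mul,
      (forall (k : Cplx R) (a b c : A), mul (k *: a + b) c = k *: mul a c + mul b c),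
      (forall (k : Cplx R) (a b c : A), mul c (k *: a + b) = k *: mul c a + mul c b),
      `|one| = 1 &
      (forall a b : A, `|mul a b| <= `|a| * `|b|)].

Definition left_banach_module (R : realType) (A X : completeNormedModType (Cplx R))
    (mul : A -> A -> A) (one : A) (act : A -> X -> X) : Prop :=
  [/\ (forall (k : Cplx R) (a a' : A) (x : X), act (k *: a + a') x = k *: act a x + act a' x),
      (forall (k : Cplx R) (a : A) (x y : X), act a (k *: x + y) = k *: act a x + act a y),
      (forall (a a' : A) (x : X), act (mul a a') x = act a (act a' x)),
      (forall x : X, act one x = x) &
      (forall (a : A) (x : X), `|act a x| <= `|a| * `|x|)].

Definition right_banach_module (R : realType) (B X : completeNormedModType (Cplx R))
    (mul : B -> B -> B) (one : B) (act : X -> B -> X) : Prop :=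
  [/\ (forall (k : Cplx R) (b b' : B) (x : X), act x (k *: b + b') = k *: act x b + act x b'),
      (forall (k : Cplx R) (b : B) (x y : X), act (k *: x + y) b = k *: act x b + act y b),
      (forall (b b' : B) (x : X), act x (mul b b') = act (act x b) b'),
      (forall x : X, act x one = x) &
      (forall (b : B) (x : X), `|act x b| <= `|x| * `|b|)].

(* i : X -> C(K) is a linear isometry, C(K) carrying the sup norm:
   each i x is continuous, i is linear and sup_k |i x k| = ||x||. *)
Definition linear_isometry_CK (R : realType) (X : completeNormedModType (Cplx R))
    (K : topologicalType) (i : X -> K -> Cplx R) : Prop :=
  [/\ (forall x : X, continuous (i x)),
      (forall (c : Cplx R) (x y : X), i (c *: x + y) = (fun k => c * i x k + i y k)),
      (forall (x : X) (k : K), `|i x k| <= `|x|) &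
      (forall (x : X) (e : Cplx R), 0 < e -> exists k : K, `|x| - e < `|i x k|)].

Definition contractive_unital_hom_CK (R : realType) (A : completeNormedModType (Cplx R))
    (mul : A -> A -> A) (one : A) (K : topologicalType) (theta : A -> K -> Cplx R) : Prop :=
  [/\ (forall a : A, continuous (theta a)),
      (forall (c : Cplx R) (a b : A), theta (c *: a + b) = (fun k => c * theta a k + theta b k)),
      (forall a b : A, theta (mul a b) = (fun k => theta a k * theta b k)),
      theta one = (fun _ => 1) &
      (forall (a : A) (k : K), `|theta a k| <= `|a|)].

Definition left_function_module (R : realType) (A X : completeNormedModType (Cplx R))
    (mul : A -> A -> A) (one : A) (act : A -> X -> X) : Prop :=
  exists K : topologicalType,
    [/\ compact [set: K], hausdorff_space K &
      exists (i : X -> K -> Cplx R) (theta : A -> K -> Cplx R),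
        [/\ linear_isometry_CK i, contractive_unital_hom_CK mul one theta &
            forall (a : A) (x : X), i (act a x) = (fun k => theta a k * i x k)]].

Definition right_function_module (R : realType) (B X : completeNormedModType (Cplx R))
    (mul : B -> B -> B) (one : B) (act : X -> B -> X) : Prop :=
  exists K : topologicalType,
    [/\ compact [set: K], hausdorff_space K &
      exists (i : X -> K -> Cplx R) (theta : B -> K -> Cplx R),
        [/\ linear_isometry_CK i, contractive_unital_hom_CK mul one theta &
            forall (b : B) (x : X), i (act x b) = (fun k => i x k * theta b k)]].

From HB Require Import structures.
From mathcomp Require Import all_boot all_order all_algebra.
From mathcomp Require Import all_classical all_reals all_analysis.
From mathcomp Require Import complex.
From mathcomp.algebra_tactics Require Import ring lra.
Set Implicit Arguments. Unset Strict Implicit. Unset Printing Implicit Defensive.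
Import Order.TTheory GRing.Theory Num.Theory.
Import numFieldTopology.Exports numFieldNormedType.Exports.
Local Open Scope ring_scope.
Local Open Scope complex_scope.
Local Open Scope classical_set_scope.

(* An extreme point [u] of the unit ball of the real dual of [X] (obtained
   by Zorn's lemma and Hahn-Banach) acts on every multiplication operator
   [T] of a function module like a complex scalar:
   [u (T x) = al * u x + be * u ('i *: x)].  To see this, write the
   multiplier as [(2 M ha - M) + 'i (2 M hb - M)] with weights [ha], [hb]
   valued in [[0, 1]], extend [u] from [X * 0 * 0] to a functional on
   [X * X * X] dominated by the sup norm of [iota x1 + ha iota x2 + hb iota x3],
   and use extremality to see that its restrictions to the last two factors
   are multiples of [u].  Left multiplication by [a] and right
   multiplication by [b] are such operators and commute with ['i *: _], so
   [u] takes the same value on [(a x) b] and [a (x b)]; as extreme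
   functionals separate points, the two vectors are equal. *)

Section InfSupImage.
Variables (R : realType) (T : Type) (A : set T).

Lemma ge_inf_image (F : T -> R) (b : R) t :
  (forall s, A s -> b <= F s) -> A t -> inf [set F s | s in A] <= F t.
Proof.
move=> hb At; apply: ge_inf; last by exists t.
by exists b => _ [s As <-]; exact: hb.
Qed.

Lemma lb_le_inf_image (F : T -> R) c :
  A !=set0 -> (forall s, A s -> c <= F s) -> c <= inf [set F s | s in A].
Proof.
move=> [t At] h; apply: lb_le_inf; first by exists (F t), t.
by move=> _ [s As <-]; exact: h.
Qed.

Lemma ub_le_sup_image (F : T -> R) (b : R) t :
  (forall s, A s -> F s <= b) -> A t -> F t <= sup [set F s | s in A].
Proof.
move=> hb At; apply: ub_le_sup; last by exists t.
by exists b => _ [s As <-]; exact: hb.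
Qed.

Lemma ge_sup_image (F : T -> R) c :
  A !=set0 -> (forall s, A s -> F s <= c) -> sup [set F s | s in A] <= c.
Proof.
move=> [t At] h; apply: ge_sup; first by exists (F t), t.
by move=> _ [s As <-]; exact: h.
Qed.

Lemma lb_le_inf_image_add (F G : T -> R) c : A !=set0 ->
  (forall s t, A s -> A t -> c <= F s + G t) ->
  c <= inf [set F s | s in A] + inf [set G t | t in A].
Proof.
move=> A0 h; rewrite -lerBlDl; apply: lb_le_inf_image => // t At.
rewrite lerBlDr -lerBlDl; apply: lb_le_inf_image => // s As.
by rewrite lerBlDl addrC; exact: h.
Qed.

End InfSupImage.

Section SublinearFunctionals.
Variables (R : realType) (V : lmodType R[i]).

Record sublinear (p : V -> R) : Prop := Sublinear {
  sublinearD : forall x y, p (x + y) <= p x + p y;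
  sublinearZ : forall (r : R) x, 0 <= r -> p (r%:C *: x) = r * p x }.

Record real_linear (u : V -> R) : Prop := RealLinear {
  rlinearD : forall x y, u (x + y) = u x + u y;
  rlinearZ : forall (r : R) x, u (r%:C *: x) = r * u x }.

Definition fun_le (p q : V -> R) := forall x, p x <= q x.

(* Homogeneity only needs to be checked as an inequality: it is then
   reversed by scaling with [r^-1]. *)
Lemma sublinearP (p : V -> R) :
  (forall x y, p (x + y) <= p x + p y) ->
  (forall (r : R) x, 0 < r -> p (r%:C *: x) <= r * p x) -> sublinear p.
Proof.
move=> pD pZ; split => // r x r0.
have p0_eq0 : p 0 = 0.
  have := pD 0 0; have := pZ 2^-1 0; rewrite addr0 scaler0 invr_gt0 ltr0Sn => /(_ isT).
  lra.
have [->|rneq0] := eqVneq r 0; first by rewrite mul0r scale0r p0_eq0.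
have rgt0 : 0 < r by rewrite lt_def rneq0.
apply/eqP; rewrite eq_le pZ //=.
have := pZ r^-1 (r%:C *: x); rewrite invr_gt0 scalerA -rmorphM mulVf //.
rewrite scale1r => /(_ rgt0); rewrite -ler_pdivrMl ?invr_gt0 // invrK.
by rewrite mulrC.
Qed.

Lemma sublinear0 p : sublinear p -> p 0 = 0.
Proof. by move=> hp; have := sublinearZ hp 0 (lexx 0); rewrite scale0r mul0r. Qed.

Lemma sublinear_ge_opp p x : sublinear p -> - p (- x) <= p x.
Proof. by move=> hp; have := sublinearD hp x (- x); rewrite subrr sublinear0 //; lra. Qed.

Lemma rlinear0 u : real_linear u -> u 0 = 0.
Proof. by move=> hu; have := rlinearZ hu 0 0; rewrite scale0r mul0r. Qed.

Lemma rlinearN u x : real_linear u -> u (- x) = - u x.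
Proof.
move=> hu; apply/eqP; rewrite -addr_eq0 -rlinearD // addNr.
by rewrite rlinear0.
Qed.

Lemma rlinearB u x y : real_linear u -> u (x - y) = u x - u y.
Proof. by move=> hu; rewrite rlinearD // rlinearN. Qed.

Lemma rlinear_comb (f g : V -> R) a b : real_linear f -> real_linear g ->
  real_linear (fun x => a * f x + b * g x).
Proof.
move=> [fD fZ] [gD gZ]; split=> [x y|r x]; rewrite ?fD ?gD ?fZ ?gZ; lra.
Qed.

Definition shiftp (p : V -> R) (y x : V) : R :=
  inf [set p (x + t%:C *: y) - t * p y | t in [set t : R | 0 <= t]].

Section Shift.
Variables (p : V -> R) (y : V).
Hypothesis hp : sublinear p.

Lemma shiftp_le x t : 0 <= t -> shiftp p y x <= p (x + t%:C *: y) - t * p y.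
Proof.
move=> t0; apply: (ge_inf_image (F := fun t => p (x + t%:C *: y) - t * p y)
  (b := - p (- x))) t0 => s s0.
have := sublinearD hp (x + s%:C *: y) (- x).
by rewrite addrC addKr sublinearZ //; lra.
Qed.

Lemma shiftp_ge x b :
  (forall t, 0 <= t -> b <= p (x + t%:C *: y) - t * p y) -> b <= shiftp p y x.
Proof. by apply: lb_le_inf_image; exists 0. Qed.

Lemma shiftp_le_self x : shiftp p y x <= p x.
Proof. by have := shiftp_le x (lexx 0); rewrite scale0r addr0 mul0r subr0. Qed.

Lemma shiftp_le_sub x : shiftp p y x <= p (x + y) - p y.
Proof. by have := shiftp_le x ler01; rewrite rmorph1 scale1r mul1r. Qed.

Lemma shiftp_sublinear : sublinear (shiftp p y).
Proof.
apply: sublinearP => [x1 x2|r x r0].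
  apply: lb_le_inf_image_add; first by exists 0; rewrite /=.
  move=> t1 t2 t10 t20; have := shiftp_le (x1 + x2) (addr_ge0 t10 t20).
  have := sublinearD hp (x1 + t1%:C *: y) (x2 + t2%:C *: y).
  by rewrite addrACA -scalerDl -rmorphD; lra.
rewrite -ler_pdivrMl //; apply: shiftp_ge => t t0.
have := shiftp_le (r%:C *: x) (mulr_ge0 (ltW r0) t0).
rewrite rmorphM -scalerA -scalerDr (sublinearZ hp _ (ltW r0)) ler_pdivrMl //.
by rewrite mulrBr mulrA; lra.
Qed.

End Shift.

Definition pointwise_inf (A : set (V -> R)) (x : V) : R := inf [set p x | p in A].

Section ChainInf.
Variables (Q : V -> R) (A : set (V -> R)).
Hypothesis hA : forall p, A p -> sublinear p /\ fun_le p Q.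
Hypotheses (A0 : A !=set0) (Achain : forall p q, A p -> A q -> fun_le p q \/ fun_le q p).

Lemma pointwise_inf_le p : A p -> fun_le (pointwise_inf A) p.
Proof.
move=> Ap x; apply: (ge_inf_image (b := - Q (- x))) => // q /hA[hq hqQ].
by have := sublinear_ge_opp x hq; have := hqQ (- x); lra.
Qed.

Lemma pointwise_inf_ge w : (forall p, A p -> fun_le w p) -> fun_le w (pointwise_inf A).
Proof. by move=> hw x; apply: lb_le_inf_image => // q Aq; exact: hw. Qed.

Lemma pointwise_inf_leQ : fun_le (pointwise_inf A) Q.
Proof. by case: A0 => p Ap x; have := pointwise_inf_le Ap x; have := (hA Ap).2 x; lra. Qed.

Lemma pointwise_inf_sublinear : sublinear (pointwise_inf A).
Proof.
apply: sublinearP => [x y|r x r0].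
  apply: lb_le_inf_image_add => // p1 p2 /[dup] A1 /hA[[h1 _] _] /[dup] A2 /hA[[h2 _] _].
  case: (Achain A1 A2) => hle.
  - by have := pointwise_inf_le A1 (x + y); have := h1 x y; have := hle y; lra.
  - by have := pointwise_inf_le A2 (x + y); have := h2 x y; have := hle x; lra.
rewrite -ler_pdivrMl //; apply: lb_le_inf_image => // q Aq.
have := pointwise_inf_le Aq (r%:C *: x).
by rewrite (sublinearZ (hA Aq).1 _ (ltW r0)) ler_pdivrMl.
Qed.

End ChainInf.

Lemma sublinear_zorn_minimal (Q : V -> R) (Phi : (V -> R) -> Prop) p0 :
  (forall p, Phi p -> sublinear p /\ fun_le p Q) ->
  (forall A, A `<=` Phi -> A !=set0 ->
     (forall p q, A p -> A q -> fun_le p q \/ fun_le q p) -> Phi (pointwise_inf A)) ->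
  Phi p0 ->
  exists p, Phi p /\ forall q, Phi q -> fun_le q p -> fun_le p q.
Proof.
move=> hPhi hchain Pp0.
pose T := {p : V -> R | Phi p}.
pose ge_fun := fun s t : T => `[< fun_le (sval t) (sval s) >].
have [] := @ZL_preorder T (exist _ p0 Pp0) ge_fun.
- by move=> t; apply/asboolP => x.
- move=> r s t /asboolP h1 /asboolP h2; apply/asboolP => x.
  exact: le_trans (h2 x) (h1 x).
- move=> A Achain.
  have [[a Aa]|A0] := pselect (A !=set0); last first.
    by exists (exist _ p0 Pp0) => s As; exfalso; apply: A0; exists s.
  pose B := [set sval s | s in A].
  have PB : B `<=` Phi by move=> _ [s _ <-]; exact: (svalP s).
  have B0 : B !=set0 by exists (sval a), a.
  have Bchain : forall p q, B p -> B q -> fun_le p q \/ fun_le q p.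
    move=> _ _ [s As <-] [t At <-].
    by case: (Achain s t As At) => /asboolP h; [right|left].
  exists (exist _ _ (hchain B PB B0 Bchain)) => s As; apply/asboolP => /=.
  by apply: (pointwise_inf_le (fun p Bp => hPhi p (PB p Bp))); exists s.
- move=> [p Pp] pmax; exists p; split => // q Pq hqp.
  by have /asboolP := pmax (exist _ q Pq) (asboolT hqp).
Qed.

Lemma exists_minimal_sublinear (Q : V -> R) : sublinear Q ->
  exists p, [/\ sublinear p, fun_le p Q &
    forall q, sublinear q -> fun_le q p -> fun_le p q].
Proof.
move=> hQ.
have chain A : A `<=` (fun p => sublinear p /\ fun_le p Q) -> A !=set0 ->
    (forall p q, A p -> A q -> fun_le p q \/ fun_le q p) ->
    sublinear (pointwise_inf A) /\ fun_le (pointwise_inf A) Q.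
  move=> hA A0 Achain.
  exact: conj (pointwise_inf_sublinear hA A0 Achain) (pointwise_inf_leQ hA A0).
have [p [[hp hpQ] pmin]] := sublinear_zorn_minimal (fun p h => h) chain
  (conj hQ (fun x => lexx (Q x))).
exists p; split => // q hq hqp; apply: pmin => //; split => // x.
exact: le_trans (hqp x) (hpQ x).
Qed.

(* A minimal sublinear [p] equals [shiftp p y], which lies below
   [p (x + y) - p y]; so [p] is additive. *)
Lemma minimal_sublinear_rlinear p :
  sublinear p -> (forall q, sublinear q -> fun_le q p -> fun_le p q) -> real_linear p.
Proof.
move=> hp pmin.
have pD : forall x y, p (x + y) = p x + p y.
  move=> x y; apply/eqP; rewrite eq_le sublinearD //=.
  have := pmin _ (shiftp_sublinear y hp) (shiftp_le_self y hp) x.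
  by have := shiftp_le_sub y hp x; lra.
have pN : forall x, p (- x) = - p x.
  by move=> x; have := pD x (- x); rewrite subrr sublinear0 //; lra.
split => // r x; have [r0|r0] := leP 0 r; first exact: sublinearZ.
have -> : r%:C *: x = - ((- r)%:C *: x) by rewrite rmorphN scaleNr opprK.
by rewrite pN sublinearZ ?mulNr ?opprK // oppr_ge0 ltW.
Qed.

Lemma exists_rlinear_le (q : V -> R) : sublinear q ->
  exists L, real_linear L /\ fun_le L q.
Proof.
move=> hq; have [p [hp hpq pmin]] := exists_minimal_sublinear hq.
by exists p; split => //; exact: minimal_sublinear_rlinear.
Qed.

End SublinearFunctionals.

Section ExtremeMinorants.
Variables (R : realType) (V : lmodType R[i]).

Definition linear_minorant (q u : V -> R) := real_linear u /\ fun_le u q.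

Definition face (N : V -> R) (F : (V -> R) -> Prop) :=
  forall u d, F u ->
    linear_minorant N (fun x => u x + d x) -> linear_minorant N (fun x => u x - d x) ->
    F (fun x => u x + d x) /\ F (fun x => u x - d x).

Definition extreme_minorant (N u : V -> R) := linear_minorant N u /\
  forall d, linear_minorant N (fun x => u x + d x) ->
    linear_minorant N (fun x => u x - d x) -> forall x, d x = 0.

Lemma linear_minorant_shiftp (q : V -> R) y u : sublinear q ->
  linear_minorant (shiftp q y) u <-> linear_minorant q u /\ q y <= u y.
Proof.
move=> hq; split.
- move=> [hu hle]; split.
    by split => // x; exact: le_trans (hle x) (shiftp_le_self y hq x).
  have := hle (- y); have := shiftp_le_sub y hq (- y).
  by rewrite addNr sublinear0 // (rlinearN _ hu); lra.
- move=> [[hu hle] hy]; split => // x; apply: shiftp_ge => t t0.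
  rewrite -[in u x](addrK (t%:C *: y) x) rlinearB // rlinearZ //.
  have := hle (x + t%:C *: y); have : t * q y <= t * u y by rewrite ler_wpM2l.
  lra.
Qed.

Lemma face_shiftp (N q : V -> R) y : sublinear q ->
  face N (linear_minorant q) -> face N (linear_minorant (shiftp q y)).
Proof.
move=> hq qface u d /(linear_minorant_shiftp _ _ hq) [hu huy] hp hm.
have [hp' hm'] := qface u d hu hp hm.
split; apply/(linear_minorant_shiftp _ _ hq); split => //.
- by have := hm'.2 y; lra.
- by have := hp'.2 y; lra.
Qed.

(* The functionals [q] used in the Zorn argument producing an extreme
   minorant of [N] that is large at [z]. *)
Definition supporting_face (N : V -> R) (z : V) (q : V -> R) :=
  [/\ sublinear q, fun_le q N, q (- z) <= - N z & face N (linear_minorant q)].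

Section SupportingFace.
Variables (N : V -> R) (z : V).
Hypothesis hN : sublinear N.

Lemma supporting_face_shiftp_self : supporting_face N z (shiftp N z).
Proof.
split; [exact: shiftp_sublinear | exact: shiftp_le_self | |].
  by have := shiftp_le_sub z hN (- z); rewrite addNr sublinear0 // sub0r.
exact: face_shiftp hN (fun u d _ hp hm => conj hp hm).
Qed.

Lemma supporting_face_shiftp q y :
  supporting_face N z q -> supporting_face N z (shiftp q y).
Proof.
move=> [hq hqN hqz qface]; split; [exact: shiftp_sublinear | | | exact: face_shiftp].
- by move=> x; exact: le_trans (shiftp_le_self y hq x) (hqN x).
- by have := shiftp_le_self y hq (- z); lra.
Qed.

Lemma supporting_face_chain A : A `<=` supporting_face N z -> A !=set0 ->
  (forall p q, A p -> A q -> fun_le p q \/ fun_le q p) ->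
  supporting_face N z (pointwise_inf A).
Proof.
move=> hA A0 Achain.
have hA' : forall p, A p -> sublinear p /\ fun_le p N by move=> p /hA[].
have minorantE u : real_linear u ->
    linear_minorant (pointwise_inf A) u <-> forall p, A p -> linear_minorant p u.
  move=> hu; split.
  - by move=> [_ hle] p Ap; split => // x; exact: le_trans (hle x) (pointwise_inf_le hA' Ap x).
  - by move=> hall; split => //; apply: (pointwise_inf_ge A0) => p /hall[].
split.
- exact: (pointwise_inf_sublinear hA' A0 Achain).
- exact: (pointwise_inf_leQ hA' A0).
- by case: A0 => p /[dup] Ap /hA[_ _ hpz _]; have := pointwise_inf_le hA' Ap (- z); lra.
- move=> u d /[dup] hu /(minorantE _ hu.1) hu' hp hm.
  split; [apply/(minorantE _ hp.1) | apply/(minorantE _ hm.1)] => p Ap;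
    by have [_ _ _ pface] := hA p Ap; have [] := pface u d (hu' p Ap) hp hm.
Qed.

(* A minimal supporting face has exactly one linear minorant, namely
   itself: comparing [q] with [shiftp q x] forces [w x = q x]. *)
Lemma minimal_supporting_face_unique q :
  supporting_face N z q ->
  (forall q', supporting_face N z q' -> fun_le q' q -> fun_le q q') ->
  forall w, linear_minorant q w -> forall x, w x = q x.
Proof.
move=> [hq hqN hqz qface] qmin w hw x.
have hshift := supporting_face_shiftp x (And4 hq hqN hqz qface).
have := qmin _ hshift (shiftp_le_self x hq) => hle.
have /(linear_minorant_shiftp _ _ hq) [[_ h1] h2] : linear_minorant (shiftp q x) w.
  by split; [exact: hw.1 | move=> y; exact: le_trans (hw.2 y) (hle y)].
by apply/eqP; rewrite eq_le h1 h2.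
Qed.

Lemma exists_extreme_minorant : exists u, extreme_minorant N u /\ N z <= u z.
Proof.
have [q [[hq hqN hqz qface] qmin]] := sublinear_zorn_minimal
  (fun p (h : supporting_face N z p) => let: And4 h1 h2 _ _ := h in conj h1 h2)
  supporting_face_chain supporting_face_shiftp_self.
have [u [hu huq]] := exists_rlinear_le hq.
have qunique := minimal_supporting_face_unique (And4 hq hqN hqz qface) qmin.
exists u; split; last by have := huq (- z); rewrite rlinearN //; lra.
split; first by split => // x; exact: le_trans (huq x) (hqN x).
move=> d hp hm x; have [hp' _] := qface u d (conj hu huq) hp hm.
by have := qunique _ hp' x; have := qunique _ (conj hu huq) x; lra.
Qed.

End SupportingFace.
End ExtremeMinorants.

Section HahnBanachExtension.
Variables (R : realType) (V W : lmodType R[i]) (j : W -> V).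
Hypothesis jD : forall a b, j (a + b) = j a + j b.
Hypothesis jZ : forall (r : R) a, j (r%:C *: a) = r%:C *: j a.
Variables (Q : V -> R) (u : W -> R).
Hypotheses (hQ : sublinear Q) (hu : real_linear u) (huQ : forall w, u w <= Q (j w)).

Lemma extension0 : j 0 = 0.
Proof. by apply: (addrI (j 0)); rewrite -jD !addr0. Qed.

Lemma extensionN a : j (- a) = - j a.
Proof. by apply/eqP; rewrite -addr_eq0 -jD addNr extension0. Qed.

(* Its linear minorants are exactly the extensions of [u] below [Q]. *)
Definition extension_gauge (xi : V) : R :=
  inf [set Q (xi + j w) - u w | w in [set: W]].

Lemma extension_gauge_le xi w : extension_gauge xi <= Q (xi + j w) - u w.
Proof.
apply: (ge_inf_image (F := fun w => Q (xi + j w) - u w) (b := - Q (- xi))) => // w' _.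
have := sublinearD hQ (xi + j w') (- xi); rewrite addrC addKr.
by have := huQ w'; lra.
Qed.

Lemma extension_gauge_sublinear : sublinear extension_gauge.
Proof.
apply: sublinearP => [x1 x2|r x r0].
  apply: lb_le_inf_image_add; first by exists 0.
  move=> w1 w2 _ _; have := extension_gauge_le (x1 + x2) (w1 + w2).
  have := sublinearD hQ (x1 + j w1) (x2 + j w2).
  by rewrite addrACA -jD (rlinearD hu); lra.
rewrite -ler_pdivrMl //; apply: lb_le_inf_image; first by exists 0.
move=> w _; have := extension_gauge_le (r%:C *: x) (r%:C *: w).
rewrite jZ -scalerDr (sublinearZ hQ _ (ltW r0)) (rlinearZ hu) ler_pdivrMl //.
by rewrite mulrBr; lra.
Qed.

Lemma hahn_banach_extension :
  exists L, [/\ real_linear L, fun_le L Q & forall w, L (j w) = u w].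
Proof.
have [L [hL hLgauge]] := exists_rlinear_le extension_gauge_sublinear.
have gauge0 xi : extension_gauge xi <= Q xi.
  by have := extension_gauge_le xi 0; rewrite extension0 addr0 rlinear0 // subr0.
have Lj_le w : L (j w) <= u w.
  have := hLgauge (j w); have := extension_gauge_le (j w) (- w).
  by rewrite -jD addrN extension0 sublinear0 // rlinearN //; lra.
exists L; split => // [xi|w]; first exact: le_trans (hLgauge xi) (gauge0 xi).
by have := Lj_le (- w); rewrite extensionN !rlinearN //; have := Lj_le w; lra.
Qed.

End HahnBanachExtension.

Section RealNorms.
Variable R : realType.
Local Notation C := (Cplx R).

(* The norms of [Cplx R] and of normed spaces over it are complex numbers;
   [cmod] and [rnorm] are their real parts. *)
Definition cmod (c : C) : R := complex.Re `|c|.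

Lemma cmodE (c : C) : `|c| = (cmod c)%:C.
Proof. by rewrite RRe_real ?normr_real. Qed.

Lemma cmod_ge0 c : 0 <= cmod c.
Proof. by have := normr_ge0 c; rewrite cmodE ler0c. Qed.

Lemma cmodM c d : cmod (c * d) = cmod c * cmod d.
Proof. by apply: complexI; rewrite rmorphM -!cmodE normrM. Qed.

Lemma cmodD c d : cmod (c + d) <= cmod c + cmod d.
Proof. by have := ler_normD c d; rewrite !cmodE -rmorphD lecR. Qed.

Lemma cmod0 : cmod 0 = 0.
Proof. by rewrite /cmod normr0. Qed.

Lemma cmod_real r : 0 <= r -> cmod r%:C = r.
Proof. by move=> r0; rewrite /cmod ger0_norm ?ler0c. Qed.

Lemma cmod_i : cmod 'i = 1.
Proof. by rewrite /cmod normc_def /= expr0n expr1n add0r sqrtr1. Qed.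

Lemma cmod_ge_Re c : `|complex.Re c| <= cmod c.
Proof. by have := normc_ge_Re c; rewrite cmodE lecR. Qed.

Lemma cmod_ge_Im c : `|complex.Im c| <= cmod c.
Proof.
have := cmod_ge_Re (c * 'i); rewrite cmodM cmod_i mulr1.
by case: c => a b /=; rewrite !mulr0 !mulr1 sub0r normrN.
Qed.

Lemma cmod_scale_le (h : R) c : 0 <= h -> h <= 1 -> cmod (h%:C * c) <= cmod c.
Proof. by move=> h0 h1; rewrite cmodM cmod_real // ler_piMl ?cmod_ge0. Qed.

Variable X : normedModType C.

Definition rnorm (x : X) : R := complex.Re `|x|.

Lemma rnormE (x : X) : `|x| = (rnorm x)%:C.
Proof. by rewrite RRe_real ?normr_real. Qed.

Lemma rnorm_ge0 x : 0 <= rnorm x.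
Proof. by have := normr_ge0 x; rewrite rnormE ler0c. Qed.

Lemma rnormD x y : rnorm (x + y) <= rnorm x + rnorm y.
Proof. by have := ler_normD x y; rewrite !rnormE -rmorphD lecR. Qed.

Lemma rnormZ (c : C) x : rnorm (c *: x) = cmod c * rnorm x.
Proof. by rewrite /rnorm normrZ cmodE rnormE -rmorphM. Qed.

Lemma rnorm0 : rnorm 0 = 0.
Proof. by rewrite /rnorm normr0. Qed.

Lemma rnorm_eq0 x : rnorm x = 0 -> x = 0.
Proof. by move=> h; apply/normr0_eq0; rewrite rnormE h. Qed.

Lemma rnorm_sublinear : sublinear rnorm.
Proof. by split=> [|r x r0]; [exact: rnormD | rewrite rnormZ cmod_real]. Qed.

Lemma rlinear_le_mul_rnorm (f : X -> R) s : real_linear f ->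
  (forall x, rnorm x <= 1 -> f x <= s) -> forall x, f x <= s * rnorm x.
Proof.
move=> hf h x; have [e|ne] := eqVneq (rnorm x) 0.
  by rewrite (rnorm_eq0 e) rlinear0 // rnorm0 mulr0.
have n0 : 0 < rnorm x by rewrite lt_def ne rnorm_ge0.
have := h ((rnorm x)^-1%:C *: x).
rewrite rnormZ cmod_real ?invr_ge0 ?rnorm_ge0 // mulVf // lexx rlinearZ //.
by move=> /(_ isT); rewrite ler_pdivrMl // mulrC.
Qed.

(* An extreme point of the unit ball of the real dual of [X]. *)
Definition extreme_functional (u : X -> R) := extreme_minorant rnorm u.

(* The perturbation [s2 u1 - s1 u2] keeps [u] in the unit ball in both
   directions, hence vanishes. *)
Lemma extreme_functional_split (u u1 u2 : X -> R) s1 s2 :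
  extreme_functional u -> real_linear u1 -> real_linear u2 ->
  (forall x, u x = u1 x + u2 x) ->
  (forall x, u1 x <= s1 * rnorm x) -> (forall x, u2 x <= s2 * rnorm x) ->
  0 <= s1 -> 0 <= s2 -> s1 + s2 <= 1 ->
  forall x, s2 * u1 x = s1 * u2 x.
Proof.
move=> [_ uext] h1 h2 uE b1 b2 s1p s2p s12 x.
have comb a b : 0 <= a -> 0 <= b -> a * s1 + b * s2 <= 1 ->
    linear_minorant rnorm (fun x => a * u1 x + b * u2 x).
  move=> a0 b0 ab1; split; first exact: rlinear_comb.
  move=> y; have := ler_wpM2l a0 (b1 y); have := ler_wpM2l b0 (b2 y).
  by have := ler_wpM2r (rnorm_ge0 y) ab1; rewrite mul1r; lra.
apply/eqP; rewrite -subr_eq0; apply/eqP; move: x; apply: uext.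
- have -> : (fun x => u x + (s2 * u1 x - s1 * u2 x)) =
      fun x => (1 + s2) * u1 x + (1 - s1) * u2 x.
    by apply: funext => y; rewrite uE; ring.
  by apply: comb; lra.
- have -> : (fun x => u x - (s2 * u1 x - s1 * u2 x)) =
      fun x => (1 - s2) * u1 x + (1 + s1) * u2 x.
    by apply: funext => y; rewrite uE; ring.
  by apply: comb; lra.
Qed.

Lemma rlinear_le0_rnorm (f : X -> R) : real_linear f ->
  (forall x, f x <= 0 * rnorm x) -> forall x, f x = 0.
Proof.
move=> hf b x; have := b x; have := b (- x).
by rewrite (rlinearN _ hf) !mul0r; lra.
Qed.

Lemma extreme_functional_proportional (u u1 : X -> R) :
  extreme_functional u -> real_linear u1 ->
  (forall x y, rnorm x <= 1 -> rnorm y <= 1 -> u1 x + (u y - u1 y) <= 1) ->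
  exists c, forall x, u1 x = c * u x.
Proof.
move=> /[dup] uext [[hu _] _] h1 hsplit.
pose u2 := fun x => u x - u1 x.
have h2 : real_linear u2.
  by have [D Z] := rlinear_comb 1 (-1) hu h1; split=> [x y|r x];
    [have := D x y | have := Z r x]; rewrite /u2; lra.
pose B := [set x : X | rnorm x <= 1].
have B0 : B 0 by rewrite /B /= rnorm0 ler01.
pose s1 := sup [set u1 x | x in B].
pose s2 := sup [set u2 x | x in B].
have b1 x : B x -> u1 x <= 1.
  by move=> Bx; have := hsplit x 0 Bx B0; rewrite !rlinear0 //; lra.
have b2 y : B y -> u2 y <= 1.
  by move=> By; have := hsplit 0 y B0 By; rewrite rlinear0 // /u2; lra.
have le1 x : B x -> u1 x <= s1 by move=> Bx; exact: (ub_le_sup_image b1 Bx).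
have le2 x : B x -> u2 x <= s2 by move=> Bx; exact: (ub_le_sup_image b2 Bx).
have s1_ge0 : 0 <= s1 by have := le1 0 B0; rewrite rlinear0.
have s2_ge0 : 0 <= s2 by have := le2 0 B0; rewrite rlinear0.
have s12 : s1 + s2 <= 1.
  rewrite -lerBrDl; apply: ge_sup_image; first by exists 0.
  move=> y By; rewrite lerBrDr -lerBrDl; apply: ge_sup_image; first by exists 0.
  by move=> x Bx; have := hsplit x y Bx By; rewrite /u2; lra.
have g1 := rlinear_le_mul_rnorm h1 le1.
have g2 := rlinear_le_mul_rnorm h2 le2.
have [s12_0|s12_neq0] := eqVneq (s1 + s2) 0.
  have s1_0 : s1 = 0 by lra.
  by exists 0 => x; rewrite mul0r; apply: rlinear_le0_rnorm => // y; rewrite -s1_0.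
have uE x : u x = u1 x + u2 x by rewrite /u2; lra.
have split := extreme_functional_split uext h1 h2 uE g1 g2 s1_ge0 s2_ge0 s12.
exists (s1 / (s1 + s2)) => x.
by rewrite uE -[LHS](mulKf s12_neq0) mulrDl split -mulrDr mulrA [_^-1 * s1]mulrC.
Qed.

Lemma extreme_functionals_separate (z : X) :
  (forall u, extreme_functional u -> u z = 0) -> z = 0.
Proof.
move=> h; have [u [uext huz]] := exists_extreme_minorant z rnorm_sublinear.
by apply: rnorm_eq0; apply/eqP; rewrite eq_le rnorm_ge0 andbT -(h u uext).
Qed.

End RealNorms.

Section Isometry.
Variable R : realType.
Local Notation C := (Cplx R).
Variables (X : normedModType C) (K : Type).

Record rnorm_isometry (iota : X -> K -> C) : Prop := RnormIsometry {
  isometry_linear : forall (c : C) x y, iota (c *: x + y) = fun k => c * iota x k + iota y k;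
  isometry_le : forall x k, cmod (iota x k) <= rnorm x;
  isometry_approx : forall x (e : R), 0 < e -> exists k, rnorm x - e < cmod (iota x k) }.

Variables (iota : X -> K -> C) (hiota : rnorm_isometry iota).

Lemma iota_comb c x y k : iota (c *: x + y) k = c * iota x k + iota y k.
Proof. by rewrite (isometry_linear hiota). Qed.

Lemma iota0 k : iota 0 k = 0.
Proof.
have := iota_comb 1 0 0 k; rewrite scale1r addr0 mul1r => h.
by apply: (addrI (iota 0 k)); rewrite addr0 -h.
Qed.

Lemma iotaD x y k : iota (x + y) k = iota x k + iota y k.
Proof. by have := iota_comb 1 x y k; rewrite scale1r mul1r. Qed.

Lemma iotaZ c x k : iota (c *: x) k = c * iota x k.
Proof. by have := iota_comb c x 0 k; rewrite !addr0 iota0 addr0. Qed.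

Lemma iotaN x k : iota (- x) k = - iota x k.
Proof. by rewrite -scaleN1r iotaZ mulN1r. Qed.

Lemma isometry_domain_inhabited : exists k : K, True.
Proof. by have [k _] := isometry_approx hiota 0 ltr01; exists k. Qed.

End Isometry.

Section WeightedGauge.
Variable R : realType.
Local Notation C := (Cplx R).
Variables (X : normedModType C) (K : Type) (iota : X -> K -> C).
Hypothesis hiota : rnorm_isometry iota.
Variables (ha hb : K -> R).
Hypotheses (ha01 : forall k, 0 <= ha k <= 1) (hb01 : forall k, 0 <= hb k <= 1).

Definition weighted_eval (xi : X * X * X) k : C :=
  iota xi.1.1 k + (ha k)%:C * iota xi.1.2 k + (hb k)%:C * iota xi.2 k.

Definition weighted_gauge xi := sup [set cmod (weighted_eval xi k) | k in [set: K]].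

Lemma weighted_eval_le xi k :
  cmod (weighted_eval xi k) <= rnorm xi.1.1 + rnorm xi.1.2 + rnorm xi.2.
Proof.
have [/andP[ha0 ha1] /andP[hb0 hb1]] := (ha01 k, hb01 k).
have := cmodD (iota xi.1.1 k + (ha k)%:C * iota xi.1.2 k) ((hb k)%:C * iota xi.2 k).
have := cmodD (iota xi.1.1 k) ((ha k)%:C * iota xi.1.2 k).
have := cmod_scale_le (iota xi.1.2 k) ha0 ha1.
have := cmod_scale_le (iota xi.2 k) hb0 hb1.
have := isometry_le hiota xi.1.1 k; have := isometry_le hiota xi.1.2 k.
by have := isometry_le hiota xi.2 k; rewrite /weighted_eval; lra.
Qed.

Lemma weighted_gauge_ge xi k : cmod (weighted_eval xi k) <= weighted_gauge xi.
Proof.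
apply: (ub_le_sup_image (F := fun k => cmod (weighted_eval xi k))
  (b := rnorm xi.1.1 + rnorm xi.1.2 + rnorm xi.2)) => // k' _.
exact: weighted_eval_le.
Qed.

Lemma weighted_gauge_le xi b :
  (forall k, cmod (weighted_eval xi k) <= b) -> weighted_gauge xi <= b.
Proof.
have [k _] := isometry_domain_inhabited hiota.
by move=> h; apply: ge_sup_image => [|k' _]; [exists k | exact: h].
Qed.

Lemma weighted_evalD xi xi' k :
  weighted_eval (xi + xi') k = weighted_eval xi k + weighted_eval xi' k.
Proof. by rewrite /weighted_eval !(iotaD hiota); ring. Qed.

Lemma weighted_evalZ (r : R) xi k : weighted_eval (r%:C *: xi) k = r%:C * weighted_eval xi k.
Proof. by rewrite /weighted_eval !(iotaZ hiota); ring. Qed.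

Lemma weighted_evalN xi k : weighted_eval (- xi) k = - weighted_eval xi k.
Proof. by rewrite /weighted_eval !(iotaN hiota); ring. Qed.

Lemma weighted_gauge_sublinear : sublinear weighted_gauge.
Proof.
apply: sublinearP => [x y|r x r0]; apply: weighted_gauge_le => k.
  rewrite weighted_evalD; have := cmodD (weighted_eval x k) (weighted_eval y k).
  by have := weighted_gauge_ge x k; have := weighted_gauge_ge y k; lra.
by rewrite weighted_evalZ cmodM (cmod_real (ltW r0)) ler_pM2l // weighted_gauge_ge.
Qed.

Lemma weighted_gauge_embed y : weighted_gauge (y, 0, 0) = rnorm y.
Proof.
have eval_y k : weighted_eval (y, 0, 0) k = iota y k.
  by rewrite /weighted_eval /= !(iota0 hiota) !mulr0 !addr0.
apply/eqP; rewrite eq_le; apply/andP; split.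
  by apply: weighted_gauge_le => k; rewrite eval_y (isometry_le hiota).
rewrite leNgt; apply/negP; rewrite -subr_gt0 => /(isometry_approx hiota y) [k].
by have := weighted_gauge_ge (y, 0, 0) k; rewrite eval_y; lra.
Qed.

Lemma weighted_gauge_convex_le1 (h : K -> R) xi x y :
  (forall k, 0 <= h k <= 1) -> rnorm x <= 1 -> rnorm y <= 1 ->
  (forall k, weighted_eval xi k = (h k)%:C * iota x k + (1 - h k)%:C * iota y k) ->
  weighted_gauge xi <= 1.
Proof.
move=> h01 hx hy xiE; apply: weighted_gauge_le => k; rewrite xiE.
have /andP[h0 h1] := h01 k.
have := cmodD ((h k)%:C * iota x k) ((1 - h k)%:C * iota y k).
rewrite !cmodM !cmod_real ?subr_ge0 //.
have h1' : 0 <= 1 - h k by rewrite subr_ge0.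
have := ler_wpM2l h0 (le_trans (isometry_le hiota x k) hx).
by have := ler_wpM2l h1' (le_trans (isometry_le hiota y k) hy); lra.
Qed.

Lemma weighted_gauge_sub_le0 xi xi' :
  (forall k, weighted_eval xi k = weighted_eval xi' k) -> weighted_gauge (xi - xi') <= 0.
Proof.
move=> h; apply: weighted_gauge_le => k.
by rewrite weighted_evalD weighted_evalN h subrr cmod0.
Qed.

Lemma rlinear_weighted_eval_eq (L : X * X * X -> R) xi xi' :
  real_linear L -> fun_le L weighted_gauge ->
  (forall k, weighted_eval xi k = weighted_eval xi' k) -> L xi = L xi'.
Proof.
move=> hL hLQ h; have := hLQ (xi - xi'); have := hLQ (xi' - xi).
have := weighted_gauge_sub_le0 h; have := weighted_gauge_sub_le0 (fun k => esym (h k)).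
by rewrite !(rlinearB _ _ hL); lra.
Qed.

Section Extension.
Variables (u : X -> R) (L : X * X * X -> R).
Hypotheses (uext : extreme_functional u) (hL : real_linear L).
Hypotheses (hLQ : fun_le L weighted_gauge) (hLu : forall w, L (w, 0, 0) = u w).

Lemma extension_slot_proportional (e : X -> X * X * X) (h : K -> R) :
  (forall a b, e (a + b) = e a + e b) -> (forall (r : R) a, e (r%:C *: a) = r%:C *: e a) ->
  (forall k, 0 <= h k <= 1) ->
  (forall x y k, weighted_eval ((y, 0, 0) + e (x - y)) k =
     (h k)%:C * iota x k + (1 - h k)%:C * iota y k) ->
  exists c, forall x, L (e x) = c * u x.
Proof.
move=> eD eZ h01 eE.
have he : real_linear (fun x => L (e x)).
  by split => [a b|r a]; rewrite ?eD ?eZ ?(rlinearD hL) ?(rlinearZ hL).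
apply: extreme_functional_proportional => // x y hx hy.
have <- : L ((y, 0, 0) + e (x - y)) = L (e x) + (u y - L (e y)).
  by rewrite (rlinearD hL) hLu (rlinearB _ _ he); lra.
exact: le_trans (hLQ _) (weighted_gauge_convex_le1 h01 hx hy (eE x y)).
Qed.

End Extension.

(* Extend [u] from [X * 0 * 0] to [X * X * X] below [weighted_gauge]; the
   restrictions of the extension to the other two factors are then
   proportional to [u] by extremality. *)
Lemma extreme_functional_weighted u : extreme_functional u ->
  exists ca cb, forall w y1 y2 y3,
    (forall k, iota w k = weighted_eval (y1, y2, y3) k) ->
    u w = u y1 + ca * u y2 + cb * u y3.
Proof.
move=> /[dup] uext [[hu huN] _].
have [L [hL hLQ hLu]] : exists L, [/\ real_linear L, fun_le L weighted_gauge &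
    forall w, L (w, 0, 0) = u w].
  apply: (hahn_banach_extension (j := fun w => (w, 0, 0))) => [a b|r a||//|w].
  - by congr (_, _, _) => /=; rewrite addr0.
  - by congr (_, _, _) => /=; rewrite scaler0.
  - exact: weighted_gauge_sublinear.
  - by rewrite weighted_gauge_embed; exact: huN.
have [ca hca] : exists c, forall x, L (0, x, 0) = c * u x.
  apply: (extension_slot_proportional uext hL hLQ hLu (e := fun x => (0, x, 0)) (h := ha))
    => // [a b|r a|x y k].
  - by congr (_, _, _) => /=; rewrite addr0.
  - by congr (_, _, _) => /=; rewrite scaler0.
  - rewrite /weighted_eval /= !addr0 add0r (iotaD hiota) (iotaN hiota) (iota0 hiota).
    by rewrite rmorphB rmorph1; ring.
have [cb hcb] : exists c, forall x, L (0, 0, x) = c * u x.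
  apply: (extension_slot_proportional uext hL hLQ hLu (e := fun x => (0, 0, x)) (h := hb))
    => // [a b|r a|x y k].
  - by congr (_, _, _) => /=; rewrite addr0.
  - by congr (_, _, _) => /=; rewrite scaler0.
  - rewrite /weighted_eval /= !addr0 !add0r (iotaD hiota) (iotaN hiota) (iota0 hiota).
    by rewrite rmorphB rmorph1; ring.
exists ca, cb => w y1 y2 y3 hw.
rewrite -hLu (rlinear_weighted_eval_eq hL hLQ (xi' := (y1, 0, 0) + (0, y2, 0) + (0, 0, y3))).
  by rewrite !(rlinearD hL) hLu hca hcb.
move=> k; have := hw k; rewrite /weighted_eval /= !addr0 !add0r !(iota0 hiota).
by rewrite !mulr0 !addr0 => ->.
Qed.

End WeightedGauge.

Section Multiplier.
Variable R : realType.
Local Notation C := (Cplx R).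

Lemma bounded_weights (K : Type) (f : K -> C) (M : R) :
  0 < M -> (forall k, cmod (f k) <= M) ->
  exists ha hb : K -> R, [/\ forall k, 0 <= ha k <= 1, forall k, 0 <= hb k <= 1 &
    forall k, f k = (2 * M * ha k - M)%:C + 'i * (2 * M * hb k - M)%:C].
Proof.
move=> M0 fM; have M2 : 0 < 2 * M by rewrite mulr_gt0.
have w01 (a : R) : `|a| <= M -> 0 <= (a + M) / (2 * M) <= 1.
  rewrite ler_norml => /andP[h1 h2]; apply/andP; split.
    by rewrite divr_ge0 ?(ltW M2) //; lra.
  by rewrite ler_pdivrMr // mul1r; lra.
have wK (a : R) : 2 * M * ((a + M) / (2 * M)) - M = a.
  by rewrite mulrC mulfVK ?addrK // lt0r_neq0.
exists (fun k => (complex.Re (f k) + M) / (2 * M)).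
exists (fun k => (complex.Im (f k) + M) / (2 * M)).
split=> k; rewrite ?wK ?w01 //; first exact: le_trans (cmod_ge_Re _) (fM k).
  exact: le_trans (cmod_ge_Im _) (fM k).
exact: complexE.
Qed.

(* Writing the multiplier [f] through weights [ha], [hb] in [[0, 1]] turns
   [iota (T x)] into a weighted evaluation of [x] and ['i *: x]. *)
Lemma extreme_functional_multiplier (X : normedModType C) (K : Type)
    (iota : X -> K -> C) (T : X -> X) (f : K -> C) (M : R) (u : X -> R) :
  rnorm_isometry iota -> extreme_functional u -> (forall k, cmod (f k) <= M) ->
  (forall x, iota (T x) = fun k => f k * iota x k) ->
  exists al be, forall x, u (T x) = al * u x + be * u ('i *: x).
Proof.
move=> hiota /[dup] uext [[hu _] _] fM hT.
have [k0 _] := isometry_domain_inhabited hiota.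
have fN k : cmod (f k) <= M + 1 by have := fM k; lra.
have N0 : 0 < M + 1 by have := le_trans (cmod_ge0 _) (fM k0); lra.
move: (M + 1) N0 fN => N N0 /(bounded_weights N0) [ha [hb [ha01 hb01 fE]]].
have [ca [cb hw]] := extreme_functional_weighted hiota ha01 hb01 uext.
exists (2 * N * ca - N), (2 * N * cb - N) => x.
rewrite (hw (T x) ((- N)%:C *: x + (- N)%:C *: ('i *: x)) ((2 * N)%:C *: x)
  ((2 * N)%:C *: ('i *: x))); first by rewrite (rlinearD hu) !(rlinearZ hu); ring.
move=> k; rewrite hT /= fE /weighted_eval /= !(iotaD hiota) !(iotaZ hiota).
by rewrite !rmorphB !rmorphN !rmorphM; ring.
Qed.

End Multiplier.

(* [T] and [S] act on the pair [(u, u \o ('i *: _))] as the complex numbers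
   [al + 'i be] and [ga + 'i de], which commute. *)
Lemma rlinear_eigen_commute (R : realType) (V : lmodType R[i]) (u : V -> R)
    (T S : V -> V) al be ga de :
  real_linear u -> scalable T -> scalable S ->
  (forall x, u (T x) = al * u x + be * u ('i *: x)) ->
  (forall x, u (S x) = ga * u x + de * u ('i *: x)) ->
  forall x, u (S (T x)) = u (T (S x)).
Proof.
move=> hu TZ SZ hT hS x.
have expand (P Q : V -> V) a b c d : scalable P ->
    (forall y, u (P y) = a * u y + b * u ('i *: y)) ->
    (forall y, u (Q y) = c * u y + d * u ('i *: y)) ->
    u (Q (P x)) = c * (a * u x + b * u ('i *: x)) + d * (a * u ('i *: x) - b * u x).
  move=> PZ hP hQ; rewrite hQ hP -PZ hP scalerA -expr2 sqr_i scaleN1r.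
  by rewrite (rlinearN _ hu); ring.
by rewrite (expand T S _ _ _ _ TZ hT hS) (expand S T _ _ _ _ SZ hS hT); ring.
Qed.

Section FunctionModules.
Variable R : realType.
Local Notation C := (Cplx R).
Variable X : completeNormedModType C.

Lemma linear_isometry_CK_rnorm (K : topologicalType) (i : X -> K -> C) :
  linear_isometry_CK i -> rnorm_isometry i.
Proof.
case=> _ hlin hle happrox; split => // [x k|x e e0].
  by have := hle x k; rewrite cmodE rnormE lecR.
have e0' : (0 : C) < e%:C by rewrite ltcR.
have [k hk] := happrox x _ e0'.
by exists k; move: hk; rewrite cmodE rnormE -rmorphB ltcR.
Qed.

Lemma contractive_hom_cmod_le (A : completeNormedModType C) (mul : A -> A -> A) one
    (K : topologicalType) (theta : A -> K -> C) :
  contractive_unital_hom_CK mul one theta -> forall a k, cmod (theta a k) <= rnorm a.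
Proof. by case=> _ _ _ _ hle a k; have := hle a k; rewrite cmodE rnormE lecR. Qed.

End FunctionModules.

Theorem mainTheorem3 (R : realType) (A B X : completeNormedModType (Cplx R))
    (mulA : A -> A -> A) (oneA : A) (mulB : B -> B -> B) (oneB : B)
    (la : A -> X -> X) (ra : X -> B -> X) :
  unital_banach_algebra mulA oneA ->
  unital_banach_algebra mulB oneB ->
  left_banach_module mulA oneA la ->
  left_function_module mulA oneA la ->
  right_banach_module mulB oneB ra ->
  right_function_module mulB oneB ra ->
  forall (a : A) (x : X) (b : B), ra (la a x) b = la a (ra x b).
Proof.
(* Only the linearity of the actions and their representations on [C(K)]
   are needed. *)
move=> _ _ [_ laL _ _ _] [K1 [_ _ [i1 [th [hi1 hth hact1]]]]]
  [_ raL _ _ _] [K2 [_ _ [i2 [ps [hi2 hps hact2]]]]] a x b.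
apply/eqP; rewrite -subr_eq0; apply/eqP.
apply: extreme_functionals_separate => u /[dup] uext [[hu _] _].
have hact2' y : i2 (ra y b) = fun k => ps b k * i2 y k.
  by rewrite hact2; apply: funext => k; rewrite mulrC.
have [al [be hT]] := extreme_functional_multiplier (linear_isometry_CK_rnorm hi1)
  uext (contractive_hom_cmod_le hth a) (hact1 a).
have [ga [de hS]] := extreme_functional_multiplier (linear_isometry_CK_rnorm hi2)
  uext (contractive_hom_cmod_le hps b) hact2'.
rewrite (rlinearB _ _ hu) (rlinear_eigen_commute hu _ _ hT hS) ?subrr //.
- exact: scalable_linear (fun k => laL k a).
- exact: scalable_linear (fun k => raL k b).
Qed.
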